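(* Let $\beta$ be a constant, $K$ a smooth positive function, $C(u)=\beta K(u)$, and $J(u)=\int K(u)\,du$ an antiderivative of $K$. Then the equation $C(u)u_t=z^{-2}\left(K(u)z^{2}u_z\right)_z$ ($z>0$) admits the Lie point symmetry generators $$\widehat Y_1=tz\partial_z+t^2\partial_t-\left(\frac{\beta}{4}z^2+\frac{3}{2}t\right)\frac{J(u)}{K(u)}\partial_u,\quad \widehat Y_2=\frac{z}{2}\partial_z+t\partial_t,\quad \widehat Y_3=\partial_t,$$ $$\widehat Y_4=t\partial_z-\left(\frac{\beta}{2}z+\frac{t}{z}\right)\frac{J(u)}{K(u)}\partial_u,\quad \widehat Y_5=\partial_z-\frac{1}{z}\frac{J(u)}{K(u)}\partial_u,\quad \widehat Y_6=-\frac{J(u)}{K(u)}\partial_u .$$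
   Context: Here $u=u(z,t)$. A vector field $Y=\xi\partial_z+\tau\partial_t+\eta\partial_u$ (coefficients depending on $z,t,u$) is an admitted Lie point symmetry generator of the equation if its second prolongation annihilates $C(u)u_t-K'(u)u_z^2-K(u)u_{zz}-\frac{2}{z}K(u)u_z$ on the solution manifold of the equation (equivalently, the one-parameter local group it generates maps solutions to solutions). *)

From Stdlib Require Import Reals.
From Coquelicot Require Import Coquelicot.
Open Scope R_scope.

(* A scalar second-order PDE in two independent variables (z,t) and one
   dependent variable u, given as a function on the second jet space with
   coordinates (z, t, u, u_z, u_t, u_zz, u_zt, u_tt). *)
Definition PDE2 := R -> R -> R -> R -> R -> R -> R -> R -> R.

(* A vector field  xi d_z + tau d_t + eta d_u  with coefficients in (z,t,u). *)
Record vfield := VField {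
  xi  : R -> R -> R -> R;
  tau : R -> R -> R -> R;
  eta : R -> R -> R -> R }.

Definition Dz0 (F : R -> R -> R -> R) z t u uz :=
  Derive (fun a => F a t u) z + uz * Derive (fun b => F z t b) u.
Definition Dt0 (F : R -> R -> R -> R) z t u ut :=
  Derive (fun a => F z a u) t + ut * Derive (fun b => F z t b) u.

Definition Dz1 (G : R -> R -> R -> R -> R -> R) z t u uz ut uzz uzt :=
  Derive (fun a => G a t u uz ut) z + uz * Derive (fun b => G z t b uz ut) u
  + uzz * Derive (fun c => G z t u c ut) uz + uzt * Derive (fun d => G z t u uz d) ut.
Definition Dt1 (G : R -> R -> R -> R -> R -> R) z t u uz ut uzt utt :=
  Derive (fun a => G z a u uz ut) t + ut * Derive (fun b => G z t b uz ut) u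
  + uzt * Derive (fun c => G z t u c ut) uz + utt * Derive (fun d => G z t u uz d) ut.

Definition eta_z (Y : vfield) z t u uz ut :=
  Dz0 (eta Y) z t u uz - uz * Dz0 (xi Y) z t u uz - ut * Dz0 (tau Y) z t u uz.
Definition eta_t (Y : vfield) z t u uz ut :=
  Dt0 (eta Y) z t u ut - uz * Dt0 (xi Y) z t u ut - ut * Dt0 (tau Y) z t u ut.
Definition eta_zz (Y : vfield) z t u uz ut uzz uzt :=
  Dz1 (eta_z Y) z t u uz ut uzz uzt
  - uzz * Dz0 (xi Y) z t u uz - uzt * Dz0 (tau Y) z t u uz.
Definition eta_zt (Y : vfield) z t u uz ut uzz uzt utt :=
  Dt1 (eta_z Y) z t u uz ut uzt utt
  - uzz * Dt0 (xi Y) z t u ut - uzt * Dt0 (tau Y) z t u ut.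
Definition eta_tt (Y : vfield) z t u uz ut uzt utt :=
  Dt1 (eta_t Y) z t u uz ut uzt utt
  - uzt * Dt0 (xi Y) z t u ut - utt * Dt0 (tau Y) z t u ut.

Definition prolong2 (Y : vfield) (Delta : PDE2) z t u uz ut uzz uzt utt :=
    xi Y z t u  * Derive (fun x => Delta x t u uz ut uzz uzt utt) z
  + tau Y z t u * Derive (fun x => Delta z x u uz ut uzz uzt utt) t
  + eta Y z t u * Derive (fun x => Delta z t x uz ut uzz uzt utt) u
  + eta_z Y z t u uz ut * Derive (fun x => Delta z t u x ut uzz uzt utt) uz
  + eta_t Y z t u uz ut * Derive (fun x => Delta z t u uz x uzz uzt utt) ut
  + eta_zz Y z t u uz ut uzz uzt * Derive (fun x => Delta z t u uz ut x uzt utt) uzz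
  + eta_zt Y z t u uz ut uzz uzt utt * Derive (fun x => Delta z t u uz ut uzz x utt) uzt
  + eta_tt Y z t u uz ut uzt utt * Derive (fun x => Delta z t u uz ut uzz uzt x) utt.

Definition is_lie_symmetry (Delta : PDE2) (Y : vfield) : Prop :=
  forall z t u uz ut uzz uzt utt, 0 < z ->
    Delta z t u uz ut uzz uzt utt = 0 ->
    prolong2 Y Delta z t u uz ut uzz uzt utt = 0.

(* The equation C(u)u_t - K'(u)u_z^2 - K(u)u_zz - (2/z)K(u)u_z = 0,
   i.e. C(u) u_t = z^{-2} (K(u) z^2 u_z)_z. *)
Definition radial_eq (C K : R -> R) : PDE2 :=
  fun z t u uz ut uzz uzt utt =>
    C u * ut - Derive K u * uz ^ 2 - K u * uzz - 2 / z * K u * uz.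

Definition Y1 (beta : R) (K J : R -> R) : vfield :=
  VField (fun z t u => t * z) (fun z t u => t ^ 2)
         (fun z t u => - (beta / 4 * z ^ 2 + 3 / 2 * t) * (J u / K u)).
Definition Y2 : vfield :=
  VField (fun z t u => z / 2) (fun z t u => t) (fun z t u => 0).
Definition Y3 : vfield :=
  VField (fun z t u => 0) (fun z t u => 1) (fun z t u => 0).
Definition Y4 (beta : R) (K J : R -> R) : vfield :=
  VField (fun z t u => t) (fun z t u => 0)
         (fun z t u => - (beta / 2 * z + t / z) * (J u / K u)).
Definition Y5 (K J : R -> R) : vfield :=
  VField (fun z t u => 1) (fun z t u => 0) (fun z t u => - (1 / z) * (J u / K u)).
Definition Y6 (K J : R -> R) : vfield :=
  VField (fun z t u => 0) (fun z t u => 0) (fun z t u => - (J u / K u)).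

From Stdlib Require Import Reals Lra FunctionalExtensionality.
From Coquelicot Require Import Coquelicot.
Open Scope R_scope.
Set Bullet Behavior "Strict Subproofs".

(* Every generator has the separable form xi = X(z,t), tau = T(t),
   eta = A(z,t) J(u)/K(u).  For such a field the second prolongation of the
   equation is (A - 2 X_z) times the equation plus K(u) times a form linear in
   u_t, u_z and J/K: every term in K' or K'' cancels because (J/K) K = J has
   derivative K.  The three coefficients of that form are linear determining
   equations for X, T, A, and each generator satisfies them. *)

Lemma prolong2_radial_eq (C K : R -> R) (Y : vfield) z t u uz ut uzz uzt utt :
  ex_derive C u -> ex_derive K u -> ex_derive (Derive K) u -> z <> 0 ->
  prolong2 Y (radial_eq C K) z t u uz ut uzz uzt utt =
    xi Y z t u * (2 / z ^ 2 * K u * uz)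
  + eta Y z t u * (Derive C u * ut - Derive (Derive K) u * uz ^ 2
                   - Derive K u * uzz - 2 / z * Derive K u * uz)
  - eta_z Y z t u uz ut * (2 * Derive K u * uz + 2 / z * K u)
  + eta_t Y z t u uz ut * C u
  - eta_zz Y z t u uz ut uzz uzt * K u.
Proof.
  intros dC dK dK' Hz.
  unfold prolong2.
  rewrite (is_derive_unique _ z (2 / z ^ 2 * K u * uz)),
    (is_derive_unique _ t 0),
    (is_derive_unique _ u (Derive C u * ut - Derive (Derive K) u * uz ^ 2
                           - Derive K u * uzz - 2 / z * Derive K u * uz)),
    (is_derive_unique _ uz (- (2 * Derive K u * uz + 2 / z * K u))),
    (is_derive_unique _ ut (C u)), (is_derive_unique _ uzz (- K u)),
    (is_derive_unique _ uzt 0), (is_derive_unique _ utt 0).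
  1: ring.
  all: unfold radial_eq; auto_derive; auto.
  (* auto_derive leaves eta-expanded functions, which field does not identify *)
  all: change (fun x => C x) with C in *; change (fun x => K x) with K in *;
    change (fun x => Derive K x) with (Derive K) in *; field; auto.
Qed.

Definition separable_field
  (X : R -> R -> R) (T : R -> R) (A : R -> R -> R) (g : R -> R) : vfield :=
  VField (fun z t _ => X z t) (fun _ t _ => T t) (fun z t u => A z t * g u).

Ltac eval_partials Hz :=
  repeat match goal with
  | H : forall z t, 0 < z -> is_derive _ _ _ |- _ =>
      rewrite (is_derive_unique _ _ _ (H _ _ Hz))
  | H : forall u, is_derive _ _ _ |- _ => rewrite (is_derive_unique _ _ _ (H _))
  end.

Ltac derive_with_partials Hz :=
  apply is_derive_unique; auto_derive;
  [repeat split; eexists; eauto | eval_partials Hz; ring].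

Section RadialEquation.

Variables (beta : R) (K C J : R -> R).
Hypothesis K_derivable : forall x, ex_derive K x.
Hypothesis K'_derivable : forall x, ex_derive (Derive K) x.
Hypothesis K_pos : forall x, 0 < K x.
Hypothesis C_def : forall x, C x = beta * K x.
Hypothesis J_antider : forall x, is_derive J x (K x).

Lemma is_derive_J_div_K u :
  is_derive (fun u => J u / K u) u (1 - J u * Derive K u / K u ^ 2).
Proof.
  assert (K_neq0 := Rgt_not_eq _ _ (K_pos u)).
  auto_derive; [repeat split; auto; eexists; eauto |].
  rewrite (is_derive_unique (fun x : R => J x) _ _ (J_antider u)).
  change (fun x => K x) with K.
  field; auto.
Qed.

Lemma is_derive_J_div_K' u :
  is_derive (fun u => 1 - J u * Derive K u / K u ^ 2) u
    (2 * J u * Derive K u ^ 2 / K u ^ 3 - Derive K u / K u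
     - J u * Derive (Derive K) u / K u ^ 2).
Proof.
  assert (K_neq0 := Rgt_not_eq _ _ (K_pos u)).
  auto_derive; [repeat split; auto; eexists; eauto |].
  rewrite (is_derive_unique (fun x : R => J x) _ _ (J_antider u)).
  change (fun x => K x) with K; change (fun x => Derive K x) with (Derive K).
  field; auto.
Qed.

Section SeparableField.

Variables (X Xz Xzz Xt : R -> R -> R) (T Tt : R -> R) (A Az Azz At : R -> R -> R).
Hypothesis X_z : forall z t, 0 < z -> is_derive (fun a => X a t) z (Xz z t).
Hypothesis X_zz : forall z t, 0 < z -> is_derive (fun a => Xz a t) z (Xzz z t).
Hypothesis X_t : forall z t, 0 < z -> is_derive (X z) t (Xt z t).
Hypothesis T_t : forall t, is_derive T t (Tt t).
Hypothesis A_z : forall z t, 0 < z -> is_derive (fun a => A a t) z (Az z t).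
Hypothesis A_zz : forall z t, 0 < z -> is_derive (fun a => Az a t) z (Azz z t).
Hypothesis A_t : forall z t, 0 < z -> is_derive (A z) t (At z t).

Section Profile.

Variables g g1 g2 : R -> R.
Hypothesis g_1 : forall u, is_derive g u (g1 u).
Hypothesis g_2 : forall u, is_derive g1 u (g2 u).

Lemma eta_z_separable_field z t u uz ut : 0 < z ->
  eta_z (separable_field X T A g) z t u uz ut
  = Az z t * g u + uz * (A z t * g1 u - Xz z t).
Proof.
  intros Hz. unfold eta_z, Dz0; simpl.
  rewrite Derive_scal_l, Derive_scal, !Derive_const; eval_partials Hz.
  ring.
Qed.

Lemma eta_t_separable_field z t u uz ut : 0 < z ->
  eta_t (separable_field X T A g) z t u uz ut
  = At z t * g u + ut * (A z t * g1 u - Tt t) - uz * Xt z t.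
Proof.
  intros Hz. unfold eta_t, Dt0; simpl.
  rewrite Derive_scal_l, Derive_scal, !Derive_const,
    (is_derive_unique (fun b : R => T b) _ _ (T_t t)); eval_partials Hz.
  ring.
Qed.

Lemma eta_zz_separable_field z t u uz ut uzz uzt : 0 < z ->
  eta_zz (separable_field X T A g) z t u uz ut uzz uzt =
    Azz z t * g u + 2 * uz * Az z t * g1 u + uz ^ 2 * A z t * g2 u - uz * Xzz z t
    + uzz * (A z t * g1 u - 2 * Xz z t).
Proof.
  intros Hz.
  assert (D_z : Derive (fun a => eta_z (separable_field X T A g) a t u uz ut) z
                = Azz z t * g u + uz * (Az z t * g1 u - Xzz z t)).
  { rewrite (Derive_ext_loc _ (fun a => Az a t * g u + uz * (A a t * g1 u - Xz a t))).
    - derive_with_partials Hz.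
    - apply (filter_imp (fun a => 0 < a)); [| exact (open_gt 0 z Hz)].
      intros; apply eta_z_separable_field; assumption. }
  assert (D_u : Derive (fun b => eta_z (separable_field X T A g) z t b uz ut) u
                = Az z t * g1 u + uz * A z t * g2 u).
  { rewrite (Derive_ext _ (fun b => Az z t * g b + uz * (A z t * g1 b - Xz z t)))
      by (intros; apply eta_z_separable_field, Hz).
    derive_with_partials Hz. }
  assert (D_uz : Derive (fun c => eta_z (separable_field X T A g) z t u c ut) uz
                 = A z t * g1 u - Xz z t).
  { rewrite (Derive_ext _ (fun c => Az z t * g u + c * (A z t * g1 u - Xz z t)))
      by (intros; apply eta_z_separable_field, Hz).
    derive_with_partials Hz. }
  assert (D_ut : Derive (fun d => eta_z (separable_field X T A g) z t u uz d) ut = 0).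
  { rewrite (Derive_ext _ (fun _ => Az z t * g u + uz * (A z t * g1 u - Xz z t)))
      by (intros; apply eta_z_separable_field, Hz).
    apply Derive_const. }
  unfold eta_zz, Dz1; rewrite D_z, D_u, D_uz, D_ut.
  unfold Dz0; simpl; rewrite !Derive_const; eval_partials Hz.
  ring.
Qed.

End Profile.

Lemma prolong2_separable_field_radial_eq z t u uz ut uzz uzt utt : 0 < z ->
  prolong2 (separable_field X T A (fun u => J u / K u)) (radial_eq C K)
    z t u uz ut uzz uzt utt
  = (A z t - 2 * Xz z t) * radial_eq C K z t u uz ut uzz uzt utt
    + K u * (beta * (2 * Xz z t - Tt t) * ut
             + (Xzz z t + 2 * X z t / z ^ 2 - 2 * Xz z t / z - beta * Xt z t
                - 2 * Az z t) * uz
             + J u / K u * (beta * At z t - Azz z t - 2 / z * Az z t)).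
Proof.
  intros Hz.
  assert (C_derivable : ex_derive C u).
  { apply (ex_derive_ext (fun x => beta * K x)); [intros; symmetry; apply C_def |].
    apply ex_derive_scal, K_derivable. }
  assert (C'_def : Derive C u = beta * Derive K u).
  { rewrite (Derive_ext C (fun x => beta * K x)) by apply C_def. apply Derive_scal. }
  rewrite prolong2_radial_eq by auto with real.
  rewrite (eta_z_separable_field _ _ is_derive_J_div_K),
    (eta_t_separable_field _ _ is_derive_J_div_K),
    (eta_zz_separable_field _ _ _ is_derive_J_div_K is_derive_J_div_K') by exact Hz.
  unfold radial_eq; simpl; rewrite C'_def, !C_def.
  field; split; apply Rgt_not_eq; [exact Hz | apply K_pos].
Qed.

Lemma separable_field_lie_symmetry :
  (forall z t, 0 < z -> Tt t = 2 * Xz z t) ->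
  (forall z t, 0 < z ->
     2 * Az z t = Xzz z t + 2 * X z t / z ^ 2 - 2 * Xz z t / z - beta * Xt z t) ->
  (forall z t, 0 < z -> beta * At z t = Azz z t + 2 / z * Az z t) ->
  is_lie_symmetry (radial_eq C K) (separable_field X T A (fun u => J u / K u)).
Proof.
  intros D_T D_X D_A z t u uz ut uzz uzt utt Hz Hsol.
  rewrite prolong2_separable_field_radial_eq, Hsol, (D_T z t), (D_X z t), (D_A z t)
    by exact Hz.
  ring.
Qed.

End SeparableField.

Ltac solve_determining :=
  intros; try auto_derive; repeat split; try field; intro; nra.

Lemma Y1_lie_symmetry : is_lie_symmetry (radial_eq C K) (Y1 beta K J).
Proof.
  apply (separable_field_lie_symmetry
    (fun z t => t * z) (fun _ t => t) (fun _ _ => 0) (fun z _ => z)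
    (fun t => t ^ 2) (fun t => 2 * t)
    (fun z t => - (beta / 4 * z ^ 2 + 3 / 2 * t)) (fun z _ => - (beta / 2 * z))
    (fun _ _ => - (beta / 2)) (fun _ _ => - (3 / 2))).
  all: solve_determining.
Qed.

Lemma Y2_lie_symmetry : is_lie_symmetry (radial_eq C K) Y2.
Proof.
  replace Y2 with (separable_field (fun z _ => z / 2) (fun t => t) (fun _ _ => 0)
                                   (fun u => J u / K u)).
  - apply (separable_field_lie_symmetry
      (fun z _ => z / 2) (fun _ _ => 1 / 2) (fun _ _ => 0) (fun _ _ => 0)
      (fun t => t) (fun _ => 1)
      (fun _ _ => 0) (fun _ _ => 0) (fun _ _ => 0) (fun _ _ => 0)).
    all: solve_determining.
  - unfold separable_field, Y2; f_equal.
    do 3 (apply functional_extensionality; intro); ring.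
Qed.

Lemma Y3_lie_symmetry : is_lie_symmetry (radial_eq C K) Y3.
Proof.
  replace Y3 with (separable_field (fun _ _ => 0) (fun _ => 1) (fun _ _ => 0)
                                   (fun u => J u / K u)).
  - apply (separable_field_lie_symmetry
      (fun _ _ => 0) (fun _ _ => 0) (fun _ _ => 0) (fun _ _ => 0)
      (fun _ => 1) (fun _ => 0)
      (fun _ _ => 0) (fun _ _ => 0) (fun _ _ => 0) (fun _ _ => 0)).
    all: solve_determining.
  - unfold separable_field, Y3; f_equal.
    do 3 (apply functional_extensionality; intro); ring.
Qed.

Lemma Y4_lie_symmetry : is_lie_symmetry (radial_eq C K) (Y4 beta K J).
Proof.
  apply (separable_field_lie_symmetry
    (fun _ t => t) (fun _ _ => 0) (fun _ _ => 0) (fun _ _ => 1)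
    (fun _ => 0) (fun _ => 0)
    (fun z t => - (beta / 2 * z + t / z)) (fun z t => - (beta / 2 - t / z ^ 2))
    (fun z t => - (2 * t / z ^ 3)) (fun z _ => - (1 / z))).
  all: solve_determining.
Qed.

Lemma Y5_lie_symmetry : is_lie_symmetry (radial_eq C K) (Y5 K J).
Proof.
  apply (separable_field_lie_symmetry
    (fun _ _ => 1) (fun _ _ => 0) (fun _ _ => 0) (fun _ _ => 0)
    (fun _ => 0) (fun _ => 0)
    (fun z _ => - (1 / z)) (fun z _ => 1 / z ^ 2)
    (fun z _ => - (2 / z ^ 3)) (fun _ _ => 0)).
  all: solve_determining.
Qed.

Lemma Y6_lie_symmetry : is_lie_symmetry (radial_eq C K) (Y6 K J).
Proof.
  replace (Y6 K J) with (separable_field (fun _ _ => 0) (fun _ => 0) (fun _ _ => -1)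
                                         (fun u => J u / K u)).
  - apply (separable_field_lie_symmetry
      (fun _ _ => 0) (fun _ _ => 0) (fun _ _ => 0) (fun _ _ => 0)
      (fun _ => 0) (fun _ => 0)
      (fun _ _ => -1) (fun _ _ => 0) (fun _ _ => 0) (fun _ _ => 0)).
    all: solve_determining.
  - unfold separable_field, Y6; f_equal.
    do 3 (apply functional_extensionality; intro); ring.
Qed.

End RadialEquation.

Theorem mainTheorem5 (beta : R) (K C J : R -> R)
  (K_smooth : forall n x, ex_derive_n K n x)
  (K_pos : forall x, 0 < K x)
  (C_def : forall x, C x = beta * K x)
  (J_antider : forall x, is_derive J x (K x)) :
  is_lie_symmetry (radial_eq C K) (Y1 beta K J) /\
  is_lie_symmetry (radial_eq C K) Y2 /\
  is_lie_symmetry (radial_eq C K) Y3 /\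
  is_lie_symmetry (radial_eq C K) (Y4 beta K J) /\
  is_lie_symmetry (radial_eq C K) (Y5 K J) /\
  is_lie_symmetry (radial_eq C K) (Y6 K J).
Proof.
  assert (K_derivable : forall x, ex_derive K x) by exact (K_smooth 1%nat).
  assert (K'_derivable : forall x, ex_derive (Derive K) x) by exact (K_smooth 2%nat).
  repeat split.
  - apply (Y1_lie_symmetry beta K C J); assumption.
  - apply (Y2_lie_symmetry beta K C J); assumption.
  - apply (Y3_lie_symmetry beta K C J); assumption.
  - apply (Y4_lie_symmetry beta K C J); assumption.
  - apply (Y5_lie_symmetry beta K C J); assumption.
  - apply (Y6_lie_symmetry beta K C J); assumption.
Qed.
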